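(* Let $X_3=\{0,1,2\}$ and let $\alpha,\beta:X_3^*\to X_3^*$ be the length-preserving maps defined recursively by $\alpha(\emptyset)=\beta(\emptyset)=\emptyset$ and, for every word $w\in X_3^*$, \[\alpha(0w)=0\alpha(w),\quad \alpha(1w)=1\alpha(w),\quad \alpha(2w)=1\beta(w),\] \[\beta(0w)=1\alpha(w),\quad \beta(1w)=1\beta(w),\quad \beta(2w)=0\beta(w).\] Let $S_L$ be the semigroup of maps $X_3^*\to X_3^*$ generated by $\alpha$ and $\beta$ under composition. Then $S_L$ has the semigroup presentation \[S_L=\langle \alpha,\beta \mid \alpha^2=\alpha,\ \alpha\beta=\beta\rangle,\] i.e. the homomorphism from the semigroup with this presentation to $S_L$ sending the generators to the maps $\alpha,\beta$ is an isomorphism.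
   Context: Composition of maps is performed from right to left: $(\mu\nu)(u)=\mu(\nu(u))$. The maps $\alpha,\beta$ are the states of a finite 3-to-2 transducer (outputs lie in $\{0,1\}^*\subset X_3^*$), regarded here as maps of ternary words. *)

From Stdlib Require Import List.
Import ListNotations.

Inductive X3 : Type := L0 | L1 | L2.

Fixpoint alpha (w : list X3) : list X3 :=
  match w with
  | [] => []
  | L0 :: w' => L0 :: alpha w'
  | L1 :: w' => L1 :: alpha w'
  | L2 :: w' => L1 :: beta w'
  end
with beta (w : list X3) : list X3 :=
  match w with
  | [] => []
  | L0 :: w' => L1 :: alpha w'
  | L1 :: w' => L1 :: beta w'
  | L2 :: w' => L0 :: beta w'
  end.

Inductive gen : Type := ga | gb.

Definition gen_map (g : gen) : list X3 -> list X3 :=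
  match g with ga => alpha | gb => beta end.

(* Evaluation of a word g1 g2 ... gn over the generators as the composite
   map g1 o g2 o ... o gn (composition right to left: (mu nu)(u) = mu(nu(u))).
   Elements of S_L are exactly the maps eval u for nonempty u. *)
Fixpoint eval (u : list gen) (w : list X3) : list X3 :=
  match u with
  | [] => w
  | g :: u' => gen_map g (eval u' w)
  end.

Inductive cong : list gen -> list gen -> Prop :=
  | cong_rel_aa : cong [ga; ga] [ga]
  | cong_rel_ab : cong [ga; gb] [gb]
  | cong_refl u : cong u u
  | cong_sym u v : cong u v -> cong v u
  | cong_trans u v x : cong u v -> cong v x -> cong u x
  | cong_ctx p q u v : cong u v -> cong (p ++ u ++ q) (p ++ v ++ q).

From Stdlib Require Import List Lia.
Import ListNotations.

(* Modulo a a = a and a b = b every nonempty word equals b^n or b^n a, so it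
   suffices to read off n and the last letter from the map of a word.  Both
   maps output words over {0,1}, on which alpha is the identity and beta turns
   the first 0 into a 1; hence a word with n letters b removes n zeros from
   0^N.  The last letter is the first map applied: on 2 0^(N+1), alpha gives
   1 1 0^N and beta gives 0 1 0^N, which shifts the final number of zeros by 2
   between words with the same number of b's. *)

Definition X3_eq_dec (x y : X3) : {x = y} + {x <> y}.
Proof. decide equality. Defined.

Definition gen_eq_dec (g h : gen) : {g = h} + {g <> h}.
Proof. decide equality. Defined.

Definition binary (w : list X3) : Prop := ~ In L2 w.

Definition zeros (w : list X3) : nat := count_occ X3_eq_dec w L0.

Definition count_b (u : list gen) : nat := count_occ gen_eq_dec u gb.

Definition normal_form (u : list gen) : list gen :=
  repeat gb (count_b u) ++ match last u gb with ga => [ga] | gb => [] end.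

Lemma count_b_app (p q : list gen) : count_b (p ++ q) = count_b p + count_b q.
Proof. apply count_occ_app. Qed.

Lemma alpha_beta_binary (w : list X3) : binary (alpha w) /\ binary (beta w).
Proof. unfold binary; induction w as [|[] w IH]; simpl; intuition discriminate. Qed.

Lemma alpha_binary (w : list X3) : binary w -> alpha w = w.
Proof.
  unfold binary; induction w as [|[] w IH]; simpl; intros Hw; try f_equal; tauto.
Qed.

Lemma zeros_beta (w : list X3) : binary w -> zeros (beta w) = zeros w - 1.
Proof.
  unfold binary, zeros; induction w as [|[] w IH]; simpl; intros Hw.
  - reflexivity.
  - rewrite alpha_binary by tauto; lia.
  - tauto.
  - tauto.
Qed.

Lemma eval_app (p q : list gen) (w : list X3) : eval (p ++ q) w = eval p (eval q w).
Proof. induction p as [|g p IH]; simpl; congruence. Qed.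

Lemma eval_binary (u : list gen) (w : list X3) : binary w -> binary (eval u w).
Proof. destruct u as [|[] u]; simpl; [tauto | intros; apply alpha_beta_binary..]. Qed.

Lemma zeros_eval (u : list gen) (w : list X3) :
  binary w -> zeros (eval u w) = zeros w - count_b u.
Proof.
  intros Hw; unfold count_b; induction u as [|[] u IH]; simpl.
  - lia.
  - rewrite alpha_binary by now apply eval_binary. exact IH.
  - rewrite zeros_beta by now apply eval_binary. lia.
Qed.

Lemma cong_eval (u v : list gen) : cong u v -> forall w, eval u w = eval v w.
Proof.
  induction 1 as [| | | | | p q u v _ IH]; intros w; simpl.
  - apply alpha_binary, alpha_beta_binary.
  - apply alpha_binary, alpha_beta_binary.
  - reflexivity.
  - auto.
  - congruence.
  - rewrite !eval_app, IH; reflexivity.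
Qed.

Lemma binary_zeros_repeat_L0 (N : nat) : binary (repeat L0 N) /\ zeros (repeat L0 N) = N.
Proof.
  split.
  - intros H2; apply repeat_spec in H2; discriminate.
  - now apply count_occ_repeat_eq.
Qed.

Lemma count_b_eval_ext (u v : list gen) :
  (forall w, eval u w = eval v w) -> count_b u = count_b v.
Proof.
  intros E.
  destruct (binary_zeros_repeat_L0 (count_b u + count_b v)) as [Hbin Hz].
  pose proof (zeros_eval u _ Hbin) as Hu; pose proof (zeros_eval v _ Hbin) as Hv.
  rewrite E, Hv, Hz in Hu; lia.
Qed.

Lemma zeros_eval_snoc (p : list gen) (g : gen) (N : nat) :
  zeros (eval (p ++ [g]) (L2 :: repeat L0 (S N))) = N + count_b [g] - count_b p.
Proof.
  destruct (binary_zeros_repeat_L0 N) as [Hbin Hz].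
  rewrite eval_app, zeros_eval by (destruct g; apply alpha_beta_binary).
  apply (f_equal (fun n => n - count_b p)).
  destruct g; simpl; rewrite (alpha_binary _ Hbin); unfold zeros, count_b in *; simpl; lia.
Qed.

Lemma last_eval_ext (u v : list gen) : u <> [] -> v <> [] ->
  (forall w, eval u w = eval v w) -> last u gb = last v gb.
Proof.
  intros Hu Hv E.
  pose proof (count_b_eval_ext u v E) as Hc.
  destruct (exists_last Hu) as (p & g & ->), (exists_last Hv) as (q & h & ->).
  rewrite !last_last.
  pose proof (zeros_eval_snoc p g (count_b (p ++ [g]))) as Zp.
  pose proof (zeros_eval_snoc q h (count_b (p ++ [g]))) as Zq.
  rewrite E, Zq in Zp.
  rewrite !count_b_app in Hc; rewrite !count_b_app in Zp.
  destruct g, h; try reflexivity; exfalso;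
    change (count_b [ga]) with 0 in *; change (count_b [gb]) with 1 in *; lia.
Qed.

Lemma last_of_count_b_0 (u : list gen) : u <> [] -> count_b u = 0 -> last u gb = ga.
Proof.
  intros Hu Hc; destruct (exists_last Hu) as (p & [] & ->); rewrite last_last; [reflexivity|].
  unfold count_b in Hc; rewrite count_occ_app in Hc; simpl in Hc; lia.
Qed.

Lemma cong_cons (g : gen) (u v : list gen) : cong u v -> cong (g :: u) (g :: v).
Proof. intros H; pose proof (cong_ctx [g] [] u v H) as Hg; rewrite !app_nil_r in Hg; exact Hg. Qed.

Lemma cong_normal_form (u : list gen) : u <> [] -> cong u (normal_form u).
Proof.
  induction u as [|g [|g' u'] IH]; intros Hne; [congruence | destruct g; apply cong_refl |].
  set (u := g' :: u') in *.
  eapply cong_trans; [apply cong_cons, IH; discriminate|].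
  unfold normal_form; change (last (g :: u) gb) with (last u gb).
  destruct g; [change (count_b (ga :: u)) with (count_b u) | apply cong_refl].
  destruct (count_b u) as [|n] eqn:Hc.
  - rewrite last_of_count_b_0 by (subst u; congruence). exact cong_rel_aa.
  - exact (cong_ctx [] _ [ga; gb] [gb] cong_rel_ab).
Qed.

Theorem mainTheorem1 :
  forall u v : list gen, u <> [] -> v <> [] ->
    ((forall w : list X3, eval u w = eval v w) <-> cong u v).
Proof.
  intros u v Hu Hv; split; [intros E | apply cong_eval].
  assert (Hnf : normal_form u = normal_form v).
  { unfold normal_form; rewrite (count_b_eval_ext u v E), (last_eval_ext u v Hu Hv E).
    reflexivity. }
  apply cong_trans with (normal_form u); [now apply cong_normal_form|].
  rewrite Hnf; now apply cong_sym, cong_normal_form.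
Qed.
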